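(* Let ${\sf S}_2(n,\ell)$ denote the number of $2$-noncrossing RNA structures (RNA secondary structures) on $\{1,\dots,n\}$ with exactly $\ell$ isolated vertices. If $n-\ell$ is a positive even integer, then $$ {\sf S}_2(n,\ell)=\frac{2}{n-\ell}\binom{\frac{n+\ell}{2}}{\frac{n-\ell}{2}+1}\binom{\frac{n+\ell}{2}-1}{\frac{n-\ell}{2}-1}. $$ Furthermore, for all integers $n\ge 2$ and $\ell\ge 0$ (with ${\sf S}_2(m,\ell)=0$ whenever $\ell>m$), $$ (n-\ell)(n-\ell+2)\,{\sf S}_2(n,\ell)-(n+\ell)(n+\ell-2)\,{\sf S}_2(n-2,\ell)=0. $$
   Context: A digraph on $\{1,\dots,n\}$ is a set of arcs $(i,j)$ with $1\le i<j\le n$. A $2$-noncrossing digraph is one in which every vertex lies in at most one arc and there are no two arcs $(i_1,j_1),(i_2,j_2)$ with $i_1<i_2<j_1<j_2$. A vertex is isolated if it lies in no arc. A $2$-noncrossing RNA structure is a $2$-noncrossing digraph with no arc of the form $(i,i+1)$. *)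

From mathcomp Require Import all_boot all_order all_algebra.
Set Implicit Arguments. Unset Strict Implicit. Unset Printing Implicit Defensive.

(* Vertices {1,...,n} are represented by 'I_n (value i stands for i+1);
   all conditions below are invariant under this shift.
   A digraph is a finite set of arcs (i,j). *)
Definition digraph (n : nat) := {set 'I_n * 'I_n}.

Definition in_arc n (G : digraph n) (v : 'I_n) : bool :=
  [exists a in G, (a.1 == v) || (a.2 == v)].

Definition isolated n (G : digraph n) : {set 'I_n} :=
  [set v | ~~ in_arc G v].

Definition arcs_ordered n (G : digraph n) : bool :=
  [forall a in G, (a.1 < a.2)%N].

Definition at_most_one_arc n (G : digraph n) : bool :=
  [forall v : 'I_n, forall a in G, forall b in G,
     ((a.1 == v) || (a.2 == v)) ==> ((b.1 == v) || (b.2 == v)) ==> (a == b)].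

Definition no_crossing n (G : digraph n) : bool :=
  [forall a in G, forall b in G,
     ~~ [&& (a.1 < b.1)%N, (b.1 < a.2)%N & (a.2 < b.2)%N]].

Definition two_noncrossing n (G : digraph n) : bool :=
  [&& arcs_ordered G, at_most_one_arc G & no_crossing G].

Definition rna_structure n (G : digraph n) : bool :=
  two_noncrossing G && [forall a in G, (a.1).+1 != a.2 :> nat].

Definition S2 (n l : nat) : nat :=
  #|[set G : digraph n | rna_structure G & #|isolated G| == l]|.

From mathcomp Require Import all_boot all_order all_algebra.
From mathcomp Require Import zify ring.
Import GRing.Theory Num.Theory.
Set Implicit Arguments. Unset Strict Implicit. Unset Printing Implicit Defensive.

(* Let v be an isolated vertex of a structure counted by S2 (n+1) (l+1). If v is not the
   middle of a hairpin (v-1, v+1), deleting v leaves a structure counted by S2 n l, and each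
   such structure arises from exactly one of the n+1 positions of v; otherwise contracting
   the hairpin to one isolated vertex leaves a structure counted by S2 (n-1) (l+1) with a
   marked isolated vertex. Double counting the pairs (G, v) gives
     (l+1) S2(n+1, l+1) = (n+1) S2(n, l) + (l+1) S2(n-1, l+1),
   which together with S2(0, 0) = 1 and S2(n+1, 0) = 0 determines S2. The closed form
   C(m, k) C(m-1, k) / (k+1), where n = l + 2k and m = l + k, satisfies the same recurrence,
   and the second identity of the theorem compares two of its consecutive values. *)

Definition touches n (a : 'I_n * 'I_n) (v : 'I_n) := (a.1 == v) || (a.2 == v).

Lemma touchesE n (a : 'I_n * 'I_n) v :
  touches a v = (a.1 == v :> nat) || (a.2 == v :> nat).
Proof. by []. Qed.

Definition noncrossing_arcs n (G : digraph n) : Prop :=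
  [/\ forall a, a \in G -> (a.1 < a.2)%N,
      forall v a b, a \in G -> b \in G -> touches a v -> touches b v -> a = b
    & forall a b, a \in G -> b \in G ->
        ~ [/\ (a.1 < b.1)%N, (b.1 < a.2)%N & (a.2 < b.2)%N]].

Definition no_unit_arc n (G : digraph n) : Prop :=
  forall a, a \in G -> (a.1).+1 != a.2 :> nat.

Lemma rna_structureP n (G : digraph n) :
  reflect (noncrossing_arcs G /\ no_unit_arc G) (rna_structure G).
Proof.
apply: (iffP andP) => [[/and3P[/forall_inP ord /forallP one /forall_inP nc]] |].
  move=> /forall_inP no_unit; split=> //; split=> // [v a b aG bG ta tb|a b aG bG].
    move/forall_inP/(_ a aG)/forall_inP/(_ b bG): (one v).
    by rewrite -/(touches a v) -/(touches b v) ta tb => /eqP.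
  by move/forall_inP/(_ b bG): (nc a aG) => /and3P nab /nab.
case=> -[ord one nc] no_unit; split; last exact/forall_inP.
apply/and3P; split; first exact/forall_inP.
  apply/forallP=> v; apply/forall_inP=> a aG; apply/forall_inP=> b bG.
  by apply/implyP=> ta; apply/implyP=> tb; rewrite (one v a b).
by apply/forall_inP=> a aG; apply/forall_inP=> b bG; apply/and3P/nc.
Qed.

Lemma isolatedP n (G : digraph n) v :
  reflect (forall a, a \in G -> ~~ touches a v) (v \in isolated G).
Proof. by rewrite inE; apply: (iffP exists_inPn). Qed.

Lemma noncrossing_sub n (G G' : digraph n) :
  G \subset G' -> noncrossing_arcs G' -> noncrossing_arcs G.
Proof.
move=> /subsetP sub [ord one nc]; split=> [a /sub|v a b /sub aG /sub bG|a b /sub aG /sub bG].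
- exact: ord.
- exact: one.
- exact: nc.
Qed.

Section MonotoneMaps.

Variables (n m : nat) (h : 'I_n -> 'I_m).

Definition arc_map (a : 'I_n * 'I_n) := (h a.1, h a.2).
Definition digraph_map (G : digraph n) : digraph m := arc_map @: G.
Definition digraph_preim (G : digraph m) : digraph n := [set a | arc_map a \in G].

Lemma touches_map_range a v : touches (arc_map a) v -> exists x, v = h x.
Proof. by case/orP=> /eqP <-; eexists. Qed.

Lemma digraph_preimK (G : digraph m) :
  (forall a, a \in G -> (a.1 \in codom h) && (a.2 \in codom h)) ->
  digraph_map (digraph_preim G) = G.
Proof.
move=> inG; apply/setP=> a; apply/imsetP/idP => [[b] | aG].
  by rewrite inE => bG ->.
case/andP: (inG a aG) => /codomP[x1 e1] /codomP[x2 e2].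
by exists (x1, x2); rewrite ?inE /arc_map /= -e1 -e2; case: a aG {e1 e2}.
Qed.

Hypothesis h_mono : {mono h : x y / (x < y)%N}.

Lemma mono_ord_inj : injective h.
Proof.
move=> x y hxy; apply/val_inj; case: (ltngtP x y) => // ltxy.
  by have := h_mono x y; rewrite hxy ltnn ltxy.
by have := h_mono y x; rewrite hxy ltnn ltxy.
Qed.

Lemma arc_map_inj : injective arc_map.
Proof.
by move=> [a1 a2] [b1 b2] [e1 e2]; rewrite (mono_ord_inj e1) (mono_ord_inj e2).
Qed.

Lemma mem_digraph_map G a : (arc_map a \in digraph_map G) = (a \in G).
Proof. exact: mem_imset _ _ arc_map_inj. Qed.

Lemma digraph_map_inj : injective digraph_map.
Proof. exact: imset_inj arc_map_inj. Qed.

Lemma touches_map a x : touches (arc_map a) (h x) = touches a x.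
Proof. by rewrite /touches /= !(inj_eq mono_ord_inj). Qed.

Lemma noncrossing_map G : noncrossing_arcs (digraph_map G) <-> noncrossing_arcs G.
Proof.
split=> [[ord one nc] | [ord one nc]].
  split=> [a /(imset_f arc_map) /ord /=|v a b aG bG ta tb|a b aG bG].
  - by rewrite h_mono.
  - apply: arc_map_inj; apply: (one (h v)); rewrite ?touches_map ?mem_digraph_map //.
  - by have := nc _ _ (imset_f arc_map aG) (imset_f arc_map bG); rewrite /= !h_mono.
split=> [_ /imsetP[a aG ->] /=|v _ _ /imsetP[a aG ->] /imsetP[b bG ->] ta tb|].
- by rewrite h_mono; apply: ord.
- have [x ev] := touches_map_range ta.
  by rewrite ev !touches_map in ta tb; rewrite (one x a b).
- by move=> _ _ /imsetP[a aG ->] /imsetP[b bG ->] /=; rewrite !h_mono; apply: nc.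
Qed.

Lemma isolated_map G v :
  (v \in isolated (digraph_map G)) = [forall x, (h x == v) ==> (x \in isolated G)].
Proof.
apply/isolatedP/forallP => [iso x | iso _ /imsetP[a aG ->]].
  apply/implyP=> /eqP hxv; subst v; apply/isolatedP=> a aG.
  by rewrite -touches_map; apply: iso; rewrite mem_digraph_map.
apply/negP=> ta; have [x ev] := touches_map_range ta.
rewrite ev touches_map in ta; move/implyP: (iso x); rewrite ev eqxx.
by move=> /(_ isT)/isolatedP/(_ a aG); rewrite ta.
Qed.

End MonotoneMaps.

Lemma isolated_setU1 n (G : digraph n) a :
  isolated (G :|: [set a]) = isolated G :&: [set u | ~~ touches a u].
Proof.
apply/setP=> u; rewrite in_setI [X in _ && X]inE.
apply/isolatedP/andP => [iso | [/isolatedP iso au] b].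
  split; last by apply: iso; rewrite !inE eqxx orbT.
  by apply/isolatedP=> b bG; apply: iso; rewrite inE bG.
by rewrite !inE => /orP[/iso // | /eqP ->].
Qed.

Definition rna_set n l := [set G : digraph n | rna_structure G & #|isolated G| == l].

Definition hairpin_at n (G : digraph n) (v : 'I_n) :=
  [exists a in G, ((a.1).+1 == v :> nat) && (a.2 == v.+1 :> nat)].

Section InsertIsolated.

Variables (n : nat) (v : 'I_n.+1).

Lemma lift_mono : {mono lift v : x y / (x < y)%N}.
Proof. by move=> x y; rewrite /= /bump; case: leqP; case: leqP; lia. Qed.

Lemma codom_lift u : (u \in codom (lift v)) = (u != v).
Proof.
apply/codomP/idP => [[x ->] | uv]; first by rewrite eq_sym neq_lift.
by rewrite eq_sym in uv; have [x -> _] := unlift_some uv; exists x.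
Qed.

Lemma isolated_lift (G : digraph n) :
  isolated (digraph_map (lift v) G) = v |: lift v @: isolated G.
Proof.
apply/setP=> u; rewrite isolated_map ?inE; last exact: lift_mono.
have [->|uv] := eqVneq u v.
  by apply/forallP=> x; rewrite eq_sym (negbTE (neq_lift v x)).
rewrite eq_sym in uv; have [x -> _] := unlift_some uv.
rewrite (mem_imset _ _ (@lift_inj _ v)); apply/forallP/idP => [/(_ x)|xI y].
  by rewrite eqxx.
by apply/implyP=> /eqP/lift_inj ->.
Qed.

Lemma card_isolated_lift (G : digraph n) :
  #|isolated (digraph_map (lift v) G)| = #|isolated G|.+1.
Proof.
rewrite isolated_lift cardsU1 card_imset; last exact: lift_inj.
have /negbTE -> // : v \notin lift v @: isolated G.
by apply/imsetP=> -[x _ vx]; move: (neq_lift v x); rewrite -vx eqxx.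
Qed.

Lemma no_unit_arc_lift (G : digraph n) : no_unit_arc G ->
  no_unit_arc (digraph_map (lift v) G) /\ ~~ hairpin_at (digraph_map (lift v) G) v.
Proof.
move=> no_unit; split=> [_ /imsetP[a aG ->] /= | ].
  by have := no_unit a aG; rewrite /= /bump; case: leqP; case: leqP; lia.
apply/exists_inP=> -[_ /imsetP[a aG ->]] /= /andP[].
by have := no_unit a aG; rewrite /bump; case: leqP; case: leqP => /=; lia.
Qed.

Lemma lift_preimK (G : digraph n.+1) : v \in isolated G ->
  digraph_map (lift v) (digraph_preim (lift v) G) = G.
Proof.
move=> /isolatedP iso; apply: digraph_preimK => a /iso.
by rewrite !codom_lift /touches negb_or.
Qed.

Lemma rna_lift_set l :
  [set G in rna_set n.+1 l.+1 | (v \in isolated G) && ~~ hairpin_at G v]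
  = digraph_map (lift v) @: rna_set n l.
Proof.
apply/setP=> G; rewrite inE; apply/idP/imsetP => [|[G0]].
  rewrite inE => /and3P[/andP[/rna_structureP[nc no_unit] /eqP cardG] vI hairpin_free].
  have defG := lift_preimK vI.
  exists (digraph_preim (lift v) G) => //; rewrite inE; apply/andP; split.
    apply/rna_structureP; split.
      by rewrite -(noncrossing_map lift_mono) defG.
    move=> [a1 a2]; rewrite inE => aG; apply/eqP=> /= ea.
    have /andP[lt1 le2] : (a1 < v <= a2)%N.
      by have := no_unit _ aG; rewrite /= /bump; case: (leqP v a1); case: (leqP v a2) => /=; lia.
    apply: (negP hairpin_free); apply/exists_inP; exists (arc_map (lift v) (a1, a2)) => //=.
    by rewrite /bump leqNgt lt1 le2 /=; apply/andP; split; apply/eqP; lia.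
  by rewrite -eqSS -card_isolated_lift defG cardG.
rewrite inE => /andP[/rna_structureP[nc no_unit] /eqP cardG0] ->.
have [no_unit' hairpin_free] := no_unit_arc_lift no_unit.
rewrite inE card_isolated_lift cardG0 eqxx isolated_lift !inE eqxx hairpin_free.
by rewrite !andbT; apply/rna_structureP; split=> //; apply/(noncrossing_map lift_mono).
Qed.

End InsertIsolated.

Section InsertHairpin.

Variables (m : nat) (w : 'I_m).

(* [skip2] renumbers the vertices of 'I_m into 'I_m.+2 leaving out w.+1 and w.+2, so that
   [add_hairpin G] replaces the vertex w of G by the hairpin (w, w.+2) around w.+1. *)
Fact skip2_subproof (x : 'I_m) : ((if (x <= w)%N then x : nat else x.+2) < m.+2)%N.
Proof. by case: ifP; have := ltn_ord x; lia. Qed.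

Definition skip2 (x : 'I_m) : 'I_m.+2 := Ordinal (skip2_subproof x).

Definition hairpin_mid : 'I_m.+2 := Ordinal (leqW (ltn_ord w) : (w.+1 < m.+2)%N).

Definition hairpin_arc : 'I_m.+2 * 'I_m.+2 :=
  (widen_ord (leqW (leqnSn m)) w, Ordinal (ltn_ord w : (w.+2 < m.+2)%N)).

Definition add_hairpin (G : digraph m) : digraph m.+2 :=
  digraph_map skip2 G :|: [set hairpin_arc].

Lemma skip2_mono : {mono skip2 : x y / (x < y)%N}.
Proof. by move=> x y /=; case: ifP; case: ifP; lia. Qed.

Lemma codom_skip2 (u : 'I_m.+2) :
  (u \in codom skip2) = (u != w.+1 :> nat) && (u != w.+2 :> nat).
Proof.
apply/codomP/andP => [[x ->] /= | [/eqP u1 /eqP u2]]; first by case: ifP; lia.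
have ltu : ((if (u <= w)%N then u : nat else u - 2) < m)%N.
  by have := ltn_ord u; have := ltn_ord w; case: ifP; lia.
by exists (Ordinal ltu); apply/val_inj => /=; case: (leqP u w) => /=; case: ifP; lia.
Qed.

Lemma arc_map_skip2_neq a : arc_map skip2 a != hairpin_arc.
Proof.
case: a => a1 a2; apply/negP; rewrite xpair_eqE => /andP[_ /eqP/(congr1 val)] /=.
by case: ifP; lia.
Qed.

Lemma mem_add_hairpin G a : (arc_map skip2 a \in add_hairpin G) = (a \in G).
Proof.
by rewrite !inE (negbTE (arc_map_skip2_neq a)) orbF (mem_digraph_map skip2_mono).
Qed.

Lemma add_hairpin_inj : injective add_hairpin.
Proof. by move=> G1 G2 eqG; apply/setP=> a; rewrite -!(mem_add_hairpin _ a) eqG. Qed.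

Lemma hairpin_arc_in G : hairpin_arc \in add_hairpin G.
Proof. by rewrite !inE eqxx orbT. Qed.

Lemma add_hairpinP G a : a \in add_hairpin G ->
  (exists2 x, x \in G & a = arc_map skip2 x) \/ a = hairpin_arc.
Proof. by rewrite !inE => /orP[/imsetP[x xG ->] | /eqP ->]; [left; exists x | right]. Qed.

Lemma noncrossing_add_hairpin G :
  noncrossing_arcs G -> w \in isolated G -> noncrossing_arcs (add_hairpin G).
Proof.
move=> /(noncrossing_map skip2_mono) [ord one nc] /isolatedP wI.
have mapG x : x \in G -> arc_map skip2 x \in digraph_map skip2 G by apply: imset_f.
have offw x : x \in G -> (x.1 != w :> nat) /\ (x.2 != w :> nat).
  by move=> /wI; rewrite touchesE negb_or => /andP.
split.
- move=> a /add_hairpinP[[x xG ->] | ->]; [exact: ord (mapG _ xG) | rewrite /=; lia].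
- move=> v a b /add_hairpinP[[[x1 x2] xG ->] | ->] /add_hairpinP[[[y1 y2] yG ->] | ->] //.
  + exact: one (mapG _ xG) (mapG _ yG).
  + have /= [] := offw _ xG; rewrite !touchesE /=; case: ifP; case: ifP; lia.
  + have /= [] := offw _ yG; rewrite !touchesE /=; case: ifP; case: ifP; lia.
- move=> a b /add_hairpinP[[[x1 x2] xG ->] | ->] /add_hairpinP[[[y1 y2] yG ->] | ->].
  + exact: nc (mapG _ xG) (mapG _ yG).
  + by have /= [] := offw _ xG; rewrite /= => ? ? []; case: ifP; case: ifP; lia.
  + by have /= [] := offw _ yG; rewrite /= => ? ? []; case: ifP; case: ifP; lia.
  + by case; lia.
Qed.

Lemma no_unit_arc_add_hairpin G : no_unit_arc G -> no_unit_arc (add_hairpin G).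
Proof.
move=> no_unit a /add_hairpinP[[[x1 x2] xG ->] | ->] /=; last lia.
by have := no_unit _ xG; rewrite /=; case: ifP; case: ifP; lia.
Qed.

Lemma isolated_add_hairpin G : w \in isolated G ->
  isolated (add_hairpin G) = hairpin_mid |: skip2 @: (isolated G :\ w).
Proof.
move=> wI; apply/setP=> u.
rewrite isolated_setU1 inE isolated_map ?inE ?touchesE /=; last exact: skip2_mono.
have [->|u1] := eqVneq u hairpin_mid.
  apply/andP; split; last by rewrite /=; lia.
  by apply/forallP=> x; apply/implyP=> /eqP/(congr1 val) /=; case: ifP; lia.
have [u2|u2] := eqVneq (u : nat) w.+2.
  rewrite orbT andbF; apply/esym/imsetP=> -[x _ /(congr1 val)] /=.
  by case: ifP; lia.
have /codomP[x ->] : u \in codom skip2.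
  by rewrite codom_skip2 u2 andbT; apply: contra u1 => /eqP u1; apply/eqP/val_inj.
rewrite (mem_imset _ _ (mono_ord_inj skip2_mono)) in_setD1.
have [->|xw] := eqVneq x w; first by rewrite /= leqnn eqxx andbF.
have -> : (w == skip2 x :> nat) = false by move: xw; rewrite /= -val_eqE /=; case: ifP; lia.
rewrite /= andbT; apply/forallP/idP => [/(_ x)|xI y]; first by rewrite eqxx.
by apply/implyP=> /eqP/(mono_ord_inj skip2_mono) ->.
Qed.

Lemma card_isolated_add_hairpin G : w \in isolated G ->
  #|isolated (add_hairpin G)| = #|isolated G|.
Proof.
move=> wI; rewrite isolated_add_hairpin // cardsU1 card_imset.
  rewrite (cardsD1 w (isolated G)) wI.
  have /negbTE -> // : hairpin_mid \notin skip2 @: (isolated G :\ w).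
  by apply/imsetP=> -[x _ /(congr1 val)] /=; case: ifP; lia.
exact: mono_ord_inj skip2_mono.
Qed.

Lemma rna_add_hairpin G : rna_structure G -> w \in isolated G ->
  [/\ rna_structure (add_hairpin G), hairpin_mid \in isolated (add_hairpin G)
    & hairpin_at (add_hairpin G) hairpin_mid].
Proof.
move=> /rna_structureP[nc no_unit] wI; split.
- apply/rna_structureP; split; first exact: noncrossing_add_hairpin.
  exact: no_unit_arc_add_hairpin.
- by rewrite isolated_add_hairpin // !inE eqxx.
- by apply/exists_inP; exists hairpin_arc; rewrite ?hairpin_arc_in //= !eqxx.
Qed.

Lemma add_hairpin_preimK G : rna_structure G -> hairpin_mid \in isolated G ->
  hairpin_at G hairpin_mid ->
  [/\ add_hairpin (digraph_preim skip2 G) = G,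
      rna_structure (digraph_preim skip2 G) & w \in isolated (digraph_preim skip2 G)].
Proof.
move=> /rna_structureP[[ord one nc] no_unit] /isolatedP midI /exists_inP[a aG].
move=> /andP[/eqP a1 /eqP a2].
have {a1 a2} ahp : a = hairpin_arc.
  by case: a aG a1 a2 => b1 b2 /= _ e1 e2; congr pair; apply: val_inj => /=; lia.
subst a.
have off_hp b : b \in G -> b != hairpin_arc ->
    ~~ touches b hairpin_arc.1 && ~~ touches b hairpin_arc.2.
  move=> bG bhp; apply/andP; split; apply/negP => tb; move/eqP: bhp; apply.
    by apply: (one hairpin_arc.1); rewrite // /touches eqxx.
  by apply: (one hairpin_arc.2); rewrite // /touches eqxx orbT.
have preim_setD1 : digraph_preim skip2 (G :\ hairpin_arc) = digraph_preim skip2 G.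
  by apply/setP=> x; rewrite !inE arc_map_skip2_neq.
have mapG : digraph_map skip2 (digraph_preim skip2 G) = G :\ hairpin_arc.
  rewrite -preim_setD1 digraph_preimK // => -[b1 b2]; rewrite in_setD1 => /andP[bhp bG].
  have := midI _ bG; have := off_hp _ bG bhp.
  by rewrite !codom_skip2 !touchesE /=; lia.
have offw (x : 'I_m * 'I_m) : x \in digraph_preim skip2 G ->
    [&& (skip2 x.1 != w :> nat), (skip2 x.2 != w :> nat) & (skip2 x.1).+1 != skip2 x.2 :> nat].
  rewrite inE => xG; have := no_unit _ xG; have := off_hp _ xG (arc_map_skip2_neq x).
  by rewrite !touchesE /= => /andP[/norP[-> ->] _] ->.
split.
- by rewrite /add_hairpin mapG setUC setD1K.
- apply/rna_structureP; split.
    apply/(noncrossing_map skip2_mono); rewrite mapG.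
    by apply: noncrossing_sub (subsetDl _ _) _; split.
  by move=> [x1 x2] /offw /=; case: ifP; case: ifP; lia.
- by apply/isolatedP=> -[x1 x2] /offw; rewrite touchesE /=; case: ifP; case: ifP; lia.
Qed.

Lemma rna_hairpin_set l :
  [set G in rna_set m.+2 l | (hairpin_mid \in isolated G) && hairpin_at G hairpin_mid]
  = add_hairpin @: [set G in rna_set m l | w \in isolated G].
Proof.
apply/setP=> G; rewrite inE; apply/idP/imsetP => [|[G0]].
  rewrite inE => /and3P[/andP[rG /eqP cardG] midI hp].
  have [defG rG0 wI] := add_hairpin_preimK rG midI hp.
  exists (digraph_preim skip2 G) => //.
  by rewrite inE wI andbT inE rG0 -card_isolated_add_hairpin // defG cardG eqxx.
rewrite inE => /andP[+ wI]; rewrite inE => /andP[rG0 /eqP cardG0] ->.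
have [rG midI hp] := rna_add_hairpin rG0 wI.
by rewrite midI hp inE rG card_isolated_add_hairpin // cardG0 eqxx.
Qed.

End InsertHairpin.

Lemma sum_card_exchange (I J : finType) (A : {pred I}) (B : I -> {set J}) :
  \sum_(i in A) #|B i| = \sum_j #|[set i in A | j \in B i]|.
Proof.
under eq_bigr => i _ do rewrite -sum1_card.
rewrite (exchange_big_dep predT) //=; apply: eq_bigr => j _.
by rewrite sum1dep_card; apply: eq_card => i; rewrite !inE.
Qed.

Lemma sum_card_isolated n l : \sum_(G in rna_set n l) #|isolated G| = (#|rna_set n l| * l)%N.
Proof. by rewrite -sum_nat_const; apply: eq_bigr => G; rewrite inE => /andP[_ /eqP]. Qed.

Lemma hairpin_at0 n (G : digraph n.+1) : ~~ hairpin_at G ord0.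
Proof. by apply/exists_inP=> -[a _ /andP[]]. Qed.

Lemma hairpin_at_max n (G : digraph n.+1) : ~~ hairpin_at G ord_max.
Proof. by apply/exists_inP=> -[[a1 a2] _ /andP[_ /eqP]] /=; have := ltn_ord a2; lia. Qed.

Lemma rna_set_small n l : (n < l)%N -> rna_set n l = set0.
Proof.
move=> ltnl; apply/setP=> G; rewrite !inE; apply/negbTE; rewrite negb_and orbC.
by rewrite neq_ltn (leq_ltn_trans (max_card _)) // card_ord.
Qed.

Lemma sum_card_isolated_no_hairpin n l :
  \sum_(v < n.+1)
     #|[set G in rna_set n.+1 l.+1 | v \in isolated G :\: [set u | hairpin_at G u]]|
  = (#|rna_set n l| * n.+1)%N.
Proof.
transitivity (\sum_(v < n.+1) #|rna_set n l|); last by rewrite sum_nat_const card_ord mulnC.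
apply: eq_bigr => v _; rewrite -(card_imset _ (digraph_map_inj (lift_mono v))) -rna_lift_set.
by apply: eq_card => G; rewrite !inE [~~ hairpin_at _ _ && _]andbC.
Qed.

Lemma sum_card_isolated_hairpin n l :
  \sum_(v < n.+1)
     #|[set G in rna_set n.+1 l.+1 | v \in isolated G :&: [set u | hairpin_at G u]]|
  = (#|rna_set n.-1 l.+1| * l.+1)%N.
Proof.
have no_hairpin (v : 'I_n.+1) : (forall G, ~~ hairpin_at G v) ->
    #|[set G in rna_set n.+1 l.+1 | v \in isolated G :&: [set u | hairpin_at G u]]| = 0%N.
  by move=> nhp; apply: eq_card0 => G; rewrite !inE (negbTE (nhp G)) !andbF.
case: n no_hairpin => [|m] no_hairpin.
  by rewrite big_ord1 no_hairpin ?rna_set_small ?cards0 // => G; apply: hairpin_at0.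
rewrite big_ord_recl big_ord_recr /= !no_hairpin ?add0n ?addn0; last first.
- by move=> G; apply: hairpin_at0.
- by move=> G; rewrite (_ : lift _ _ = ord_max); [apply: hairpin_at_max | apply: val_inj].
rewrite -sum_card_isolated sum_card_exchange; apply: eq_bigr => w _.
have -> : lift ord0 (widen_ord (leqnSn m) w) = hairpin_mid w by apply: val_inj.
rewrite -(card_imset _ (@add_hairpin_inj _ w)) -rna_hairpin_set.
by apply: eq_card => G; rewrite !inE.
Qed.

Lemma card_rna_rec n l :
  (#|rna_set n.+1 l.+1| * l.+1
   = #|rna_set n l| * n.+1 + #|rna_set n.-1 l.+1| * l.+1)%N.
Proof.
rewrite -sum_card_isolated.
under eq_bigr => G _ do rewrite -(cardsID [set v | hairpin_at G v] (isolated G)).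
rewrite big_split /= !(sum_card_exchange (rna_set n.+1 l.+1)) addnC.
by rewrite sum_card_isolated_no_hairpin sum_card_isolated_hairpin.
Qed.

(* A shortest arc encloses a vertex, which lies on a crossing or a shorter arc. *)
Lemma rna_set_no_isolated n : rna_set n.+1 0 = set0.
Proof.
apply/setP=> G; rewrite !inE; apply/negbTE/andP=> -[/rna_structureP[[ord one nc] no_unit]].
move=> /eqP/cards0_eq noiso.
have covered (u : 'I_n.+1) : exists2 b, b \in G & touches b u.
  by have /negbT := in_set0 u; rewrite -noiso inE negbK => /exists_inP.
have [a0 a0G _] := covered ord0.
case: (arg_minnP (fun a : 'I_n.+1 * 'I_n.+1 => a.2 - a.1) a0G) => -[a1 a2] aG amin.
have := ord _ aG; have := no_unit _ aG => /= a12 a12'.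
have inner : (a1.+1 < n.+1)%N by have := ltn_ord a2; lia.
have [[b1 b2] bG] := covered (Ordinal inner); have := ord _ bG; have := amin _ bG.
rewrite touchesE /= => bmin b12 /orP[] /eqP tb.
- have [e2|ne2] := eqVneq (b2 : nat) a2.
    have [e1 _] : (b1, b2) = (a1, a2) by apply: (one a2); rewrite // touchesE /= ?e2 eqxx ?orbT.
    lia.
  by apply: (nc _ _ aG bG); split=> /=; lia.
- have [e1|ne1] := eqVneq (b1 : nat) a1.
    have [_ e2] : (b1, b2) = (a1, a2) by apply: (one a1); rewrite // touchesE /= ?e1 eqxx.
    lia.
  by apply: (nc _ _ bG aG); split=> /=; lia.
Qed.

Lemma card_rna_set00 : #|rna_set 0 0| = 1%N.
Proof.
rewrite -(cards1 (set0 : digraph 0)); apply: eq_card => G.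
have -> : G = set0 by apply/setP=> -[[]].
rewrite !inE eqxx; apply/andP; split.
  by apply/rna_structureP; do !split; move=> [[]].
by apply/eqP/eq_card0 => -[].
Qed.

Local Open Scope ring_scope.

Lemma natr_eq_div_mul {R : numFieldType} (c d x y : nat) :
  (c * x = d * y)%N -> c != 0%N -> x%:R = d%:R / c%:R * y%:R :> R.
Proof.
move=> cxy c0; apply: (@mulfI _ c%:R); first by rewrite pnatr_eq0.
by rewrite mulrA mulrCA divff ?pnatr_eq0 // mulr1 -!natrM cxy.
Qed.

Ltac field_nat := field; by rewrite -[1 : rat]/(1%:R) -?natrD ?pnatr_eq0 ?addn_eq0.

Definition S2_formula (k l : nat) : rat :=
  ('C(l + k, k) * 'C((l + k).-1, k))%:R / k.+1%:R.

Lemma S2_formula0 l : S2_formula 0 l = 1.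
Proof. by rewrite /S2_formula !bin0 divr1. Qed.

Lemma S2_formula_no_isolated k : S2_formula k.+1 0 = 0.
Proof. by rewrite /S2_formula add0n /= (bin_small (ltnSn k)) muln0 mul0r. Qed.

Lemma S2_formulaS k l :
  k.+1%:R * k.+2%:R * S2_formula k.+1 l = (l + k).+1%:R * (l + k)%:R * S2_formula k l.
Proof.
rewrite /S2_formula addnS /= !natrM.
rewrite (natr_eq_div_mul (esym (mul_bin_diag (l + k).+1 k))) //.
rewrite (natr_eq_div_mul (esym (mul_bin_diag (l + k) k))) // succnK.
by field_nat.
Qed.

Lemma S2_formula_rec k l :
  l.+1%:R * S2_formula k.+1 l.+1
  = (l + k.*2).+3%:R * S2_formula k.+1 l + l.+1%:R * S2_formula k l.+1.
Proof.
rewrite /S2_formula !addnS !addSn /= !natrM.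
have e1 : (l.+1 * 'C((l + k).+2, k.+1) = (l + k).+2 * 'C((l + k).+1, k.+1))%N.
  by rewrite mul_bin_down subSS subSn ?leq_addl // addnK.
have e2 : ((l + k).+1 * 'C(l + k, k.+1) = l * 'C((l + k).+1, k.+1))%N.
  by rewrite mul_bin_down subSS addnK.
have e3 : (l.+1 * 'C((l + k).+1, k) = k.+1 * 'C((l + k).+1, k.+1))%N.
  by rewrite mul_bin_left subSn ?leq_addl // addnK.
have e4 : ((l + k).+1 * 'C(l + k, k) = k.+1 * 'C((l + k).+1, k.+1))%N.
  by rewrite mul_bin_diag.
rewrite (natr_eq_div_mul e1) // (natr_eq_div_mul e2) // (natr_eq_div_mul e3) //.
rewrite (natr_eq_div_mul e4) // -addnn.
by field_nat.
Qed.

Lemma S2_formula_binomial k l :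
  S2_formula k.+1 l = 2%:R / (k.+1).*2%:R * 'C(l + k.+1, k.+2)%:R * 'C(l + k, k)%:R.
Proof.
rewrite /S2_formula addnS /= natrM.
have e1 : (k.+2 * 'C((l + k).+1, k.+2) = l * 'C((l + k).+1, k.+1))%N.
  by rewrite mul_bin_left subSS addnK.
have e2 : (k.+1 * 'C(l + k, k.+1) = l * 'C(l + k, k))%N.
  by rewrite mul_bin_left addnK.
rewrite (natr_eq_div_mul e1) // (natr_eq_div_mul e2) // -muln2 natrM.
by field_nat.
Qed.

(* A structure with k arcs and l isolated vertices has l + k.*2 vertices. *)
Definition S2_closed (n l : nat) : rat :=
  if (l <= n)%N && ~~ odd (n - l) then S2_formula (n - l)./2 l else 0.

Variant gap_parity_spec (n l : nat) : Prop :=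
  | GapNeg of (n < l)%N
  | GapEven k of n = (l + k.*2)%N
  | GapOdd k of n = (l + k.*2.+1)%N.

Lemma gap_parityP n l : gap_parity_spec n l.
Proof.
case: (ltnP n l) => [|len]; first exact: GapNeg.
have := odd_double_half (n - l); case: (odd _) => /= half.
  by apply: (GapOdd (k := (n - l)./2)); lia.
by apply: (GapEven (k := (n - l)./2)); lia.
Qed.

Lemma S2_closed_even n l k : n = (l + k.*2)%N -> S2_closed n l = S2_formula k l.
Proof. by move=> ->; rewrite /S2_closed leq_addr addKn odd_double doubleK. Qed.

Lemma S2_closed_odd n l k : n = (l + k.*2.+1)%N -> S2_closed n l = 0.
Proof. by move=> ->; rewrite /S2_closed addKn /= odd_double andbF. Qed.

Lemma S2_closed_small n l : (n < l)%N -> S2_closed n l = 0.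
Proof. by rewrite /S2_closed ltnNge => /negbTE ->. Qed.

Lemma S2_closed_rec n l :
  l.+1%:R * S2_closed n.+1 l.+1
  = n.+1%:R * S2_closed n l + l.+1%:R * S2_closed n.-1 l.+1.
Proof.
case: (gap_parityP n l) => [ltnl | k -> | k ->].
- by rewrite !S2_closed_small ?mulr0 ?addr0 //; lia.
- rewrite (S2_closed_even (erefl (l + k.*2))).
  have -> : S2_closed (l + k.*2).+1 l.+1 = S2_formula k l.+1.
    by apply: S2_closed_even; lia.
  case: k => [|k].
    by rewrite S2_closed_small ?addn0 ?S2_formula0 ?mulr0 ?addr0 //; lia.
  have -> : S2_closed (l + k.+1.*2).-1 l.+1 = S2_formula k l.+1.
    by apply: S2_closed_even; rewrite doubleS; lia.
  by rewrite S2_formula_rec doubleS !addnS.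
- rewrite (S2_closed_odd (erefl (l + k.*2.+1))).
  rewrite (S2_closed_odd (k := k) (n := (l + k.*2.+1).+1)); last lia.
  case: k => [|k]; first by rewrite S2_closed_small ?mulr0 ?addr0 //; lia.
  by rewrite (S2_closed_odd (k := k)) ?mulr0 ?addr0 //; rewrite doubleS; lia.
Qed.

Lemma S2_closed_rec2 n l :
  (n.+2%:R - l%:R) * (n.+2%:R - l%:R + 2) * S2_closed n.+2 l
  = (n.+2%:R + l%:R) * (n.+2%:R + l%:R - 2) * S2_closed n l.
Proof.
case: (gap_parityP n.+2 l) => [ltnl | k def_n | k def_n].
- by rewrite !S2_closed_small ?mulr0 //; lia.
- case: k def_n => [|k] def_n.
    rewrite (@S2_closed_small n l) ?mulr0; last lia.
    by rewrite def_n addn0 subrr !mul0r.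
  have def_n' : n = (l + k.*2)%N by move: def_n; rewrite doubleS; lia.
  rewrite (S2_closed_even def_n) (S2_closed_even def_n') def_n' -addnn.
  transitivity (4 * (k.+1%:R * k.+2%:R * S2_formula k.+1 l)); first ring.
  by rewrite S2_formulaS; ring.
- rewrite (S2_closed_odd def_n) mulr0.
  case: k def_n => [|k] def_n; first by rewrite S2_closed_small ?mulr0 //; lia.
  by rewrite (S2_closed_odd (k := k)) ?mulr0 //; move: def_n; rewrite doubleS; lia.
Qed.

Lemma S2_closed_no_isolated n : S2_closed n.+1 0 = 0.
Proof.
case: (gap_parityP n.+1 0) => [// | k def_n | k def_n]; last exact: S2_closed_odd def_n.
by case: k def_n => [// | k] def_n; rewrite (S2_closed_even def_n) S2_formula_no_isolated.
Qed.

Lemma S2E n l : (S2 n l)%:R = S2_closed n l.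
Proof.
rewrite /S2 -/(rna_set n l).
elim: l n => [|l IHl] n.
  case: n => [|n]; last by rewrite rna_set_no_isolated cards0 S2_closed_no_isolated.
  by rewrite card_rna_set00 (S2_closed_even (k := 0)) ?S2_formula0.
elim/ltn_ind: n => -[|n] IHn; first by rewrite rna_set_small ?cards0 ?S2_closed_small.
apply: (@mulfI _ l.+1%:R); first by rewrite pnatr_eq0.
rewrite S2_closed_rec -IHl -IHn ?ltnS ?leq_pred // -!natrM -natrD.
by congr _%:R; rewrite mulnC card_rna_rec; ring.
Qed.

Theorem corollary3p2 :
  (forall n l : nat, (0 < n - l)%N -> ~~ odd (n - l) ->
     (S2 n l)%:R =
       (2%:R / (n - l)%:R : rat)
       * ('C((n + l)./2, ((n - l)./2).+1))%:R
       * ('C(((n + l)./2).-1, ((n - l)./2).-1))%:R)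
  /\
  (forall n l : nat, (2 <= n)%N ->
     ((n%:Z - l%:Z) * (n%:Z - l%:Z + 2) * (S2 n l)%:Z
      - (n%:Z + l%:Z) * (n%:Z + l%:Z - 2) * (S2 (n - 2) l)%:Z = 0 :> int)).
Proof.
split=> [n l gap_pos gap_even | [|[|n]] l // _].
  case: (gap_parityP n l) => [| k def_n | k def_n]; try lia.
  case: k def_n => [| k] def_n; first lia.
  rewrite S2E (S2_closed_even def_n) S2_formula_binomial.
  have -> : (n - l = k.+1.*2)%N by lia.
  have -> : ((n + l)./2 = l + k.+1)%N by rewrite def_n -addnn; lia.
  by rewrite doubleK /= addnS.
apply/eqP; rewrite -(intr_eq0 rat) !(rmorphB, rmorphM, rmorphD) /= -!pmulrn.
by rewrite !S2E subn2 /= S2_closed_rec2 subrr.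
Qed.
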